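(* Every group in the class $\mathcal{C}$ contains no nonabelian free subgroup.
   Context: Let $\mathcal{P}$ be the group (under composition) of piecewise linear orientation preserving self-homeomorphisms of $[0,1]$. Let $\mathrm{NS}$ be the class of groups containing no nonabelian free subsemigroup. $\mathcal{C}$ is the smallest class of groups containing all $\mathrm{NS}$-groups and the group $\mathcal{P}$, and closed under taking subgroups, homomorphic images, group extensions and directed unions. *)

From Stdlib Require Import Reals List.
Open Scope R_scope.
Import ListNotations.

Record Grp : Type := {
  carrier :> Type;
  gmul : carrier -> carrier -> carrier;
  gone : carrier;
  ginv : carrier -> carrier;
  gmulA : forall x y z, gmul x (gmul y z) = gmul (gmul x y) z;
  gmul1 : forall x, gmul gone x = x;
  gmulV : forall x, gmul (ginv x) x = gone
}.

(* Group homomorphisms (preservation of the product suffices). *)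
Definition is_hom (G H : Grp) (f : G -> H) : Prop :=
  forall x y, f (gmul G x y) = gmul H (f x) (f y).

(* Letters: (true = a, false = b) paired with an exponent sign
   (true = +1, false = -1). *)
Definition gletter (G : Grp) (a b : G) (l : bool * bool) : G :=
  let x := if fst l then a else b in
  if snd l then x else ginv G x.

Fixpoint geval (G : Grp) (a b : G) (w : list (bool * bool)) : G :=
  match w with
  | [] => gone G
  | l :: w' => gmul G (gletter G a b l) (geval G a b w')
  end.

Fixpoint reduced (w : list (bool * bool)) : Prop :=
  match w with
  | [] => True
  | l :: w' =>
      match w' with
      | [] => True
      | l' :: _ => ~ (fst l = fst l' /\ snd l <> snd l') /\ reduced w'
      end
  end.

Definition free_pair (G : Grp) (a b : G) : Prop :=
  forall w, w <> [] -> reduced w -> geval G a b w <> gone G.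

(* G contains a nonabelian free subgroup (equivalently, one of rank 2). *)
Definition has_nonab_free_subgroup (G : Grp) : Prop :=
  exists a b : G, free_pair G a b.

Fixpoint peval (G : Grp) (a b : G) (w : list bool) : G :=
  match w with
  | [] => gone G
  | l :: w' => gmul G (if l then a else b) (peval G a b w')
  end.

Definition free_semigroup_pair (G : Grp) (a b : G) : Prop :=
  forall u v : list bool, u <> [] -> v <> [] -> u <> v ->
    peval G a b u <> peval G a b v.

Definition has_nonab_free_subsemigroup (G : Grp) : Prop :=
  exists a b : G, free_semigroup_pair G a b.

Definition NS (G : Grp) : Prop := ~ has_nonab_free_subsemigroup G.

Definition in01 (x : R) : Prop := 0 <= x <= 1.

Definition is_PL_homeo (f : R -> R) : Prop :=
  f 0 = 0 /\ f 1 = 1 /\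
  (forall x y, in01 x -> in01 y -> x < y -> f x < f y) /\
  (forall y, in01 y -> exists x, in01 x /\ f x = y) /\
  exists (n : nat) (xs : nat -> R),
    xs O = 0 /\ xs n = 1 /\
    (forall i, (i < n)%nat -> xs i < xs (S i)) /\
    (forall i, (i < n)%nat -> exists c d : R,
        forall x, xs i <= x <= xs (S i) -> f x = c * x + d).

(* G is isomorphic to P: a bijection phi from G onto P (elements of P being
   functions considered on [0,1]) turning the product into composition. *)
Definition iso_to_P (G : Grp) : Prop :=
  exists phi : G -> (R -> R),
    (forall g, is_PL_homeo (phi g)) /\
    (forall h, is_PL_homeo h -> exists g, forall x, in01 x -> phi g x = h x) /\
    (forall g g', (forall x, in01 x -> phi g x = phi g' x) -> g = g') /\
    (forall g g' x, in01 x -> phi (gmul G g g') x = phi g (phi g' x)).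

Inductive inC : Grp -> Prop :=
  | C_NS : forall G, NS G -> inC G
  | C_P : forall G, iso_to_P G -> inC G
  | C_sub : forall (G H : Grp) (f : G -> H),
      is_hom G H f -> (forall x y, f x = f y -> x = y) -> inC H -> inC G
  | C_image : forall (G H : Grp) (f : G -> H),
      is_hom G H f -> (forall y, exists x, f x = y) -> inC G -> inC H
  | C_ext : forall (G N Q : Grp) (i : N -> G) (p : G -> Q),
      is_hom N G i -> (forall x y, i x = i y -> x = y) ->
      is_hom G Q p -> (forall q, exists g, p g = q) ->
      (forall g, p g = gone Q <-> exists n, i n = g) ->
      inC N -> inC Q -> inC G
  | C_dirunion : forall (G : Grp) (I : Type) (Gi : I -> Grp)
      (j : forall k, Gi k -> G),
      (forall k, is_hom (Gi k) G (j k)) ->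
      (forall k x y, j k x = j k y -> x = y) ->
      (forall k1 k2, exists k3,
          (forall x, exists y, j k3 y = j k1 x) /\
          (forall x, exists y, j k3 y = j k2 x)) ->
      (forall g, exists k x, j k x = g) ->
      (forall k, inC (Gi k)) -> inC G.

(* Closure under subgroups, quotients and directed unions is immediate, and a free pair
   generates a free semigroup, which settles NS-groups.  For an extension N -> G -> Q, the
   images in Q of a free pair a, b of G satisfy a relation c w c^-1 with w cyclically
   reduced; then w and z w z^-1, for a suitable two-letter word z, lie in N and are free,
   because substituting them into a reduced word yields a reduced word.

   For P we follow Brin and Squier.  Given a, b in P, the commutator W = [a, b] is the
   identity near every common fixed point of a and b, since commutators have slope 1 there.
   On a component (p, q) of the complement of the common fixed points write W = c U c^-1
   with U cyclically reduced: U is supported in some [y0, y1] inside (p, q), and as orbits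
   accumulate at q there is a word z with z y0 > y1, chosen so that [U, z U z^-1] is again a
   nontrivial reduced word.  This word is the identity on (p, q) and wherever W was.  The
   breakpoints of a and b bound the number of components, so finitely many steps produce a
   nontrivial relation between a and b. *)

From Stdlib Require Import Reals Lra Lia Arith List Bool Classical.
Import ListNotations.

Notation letter := (bool * bool)%type.
Definition letter_inv (l : letter) : letter := (fst l, negb (snd l)).
Definition word_inv (w : list letter) : list letter := rev (map letter_inv w).
Definition ltr0 : letter := (true, true).

Lemma letter_invK (l : letter) : letter_inv (letter_inv l) = l.
Proof. destruct l as [x s]; unfold letter_inv; simpl; now rewrite negb_involutive. Qed.

Lemma letter_inv_inj (l l' : letter) : letter_inv l = letter_inv l' -> l = l'.
Proof. intros E; rewrite <- (letter_invK l), <- (letter_invK l'), E; reflexivity. Qed.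

Lemma letter_inv_neq (l : letter) : letter_inv l <> l.
Proof. destruct l as [x []]; discriminate. Qed.

Lemma letter_same_kind (l l' : letter) :
  l' <> letter_inv l -> fst l = fst l' -> snd l = snd l'.
Proof. destruct l as [x []], l' as [y []]; simpl; intros H E; subst; auto; now contradict H. Qed.

Lemma letter_kind_neq (l l' : letter) : fst l <> fst l' -> l' <> letter_inv l.
Proof. intros H E; apply H; now rewrite E. Qed.

Lemma letter_avoid2 (x y : letter) : exists t, t <> x /\ t <> y.
Proof.
  destruct x as [[] []], y as [[] []];
  first [ exists (true, true); split; discriminate | exists (false, false); split; discriminate
        | exists (true, false); split; discriminate ].
Qed.

Lemma letter_avoid3 (x y z : letter) : exists t, t <> x /\ t <> y /\ t <> z.
Proof.
  destruct x as [[] []], y as [[] []], z as [[] []];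
  first [ exists (true, true); repeat split; discriminate
        | exists (true, false); repeat split; discriminate
        | exists (false, true); repeat split; discriminate
        | exists (false, false); repeat split; discriminate ].
Qed.

Lemma word_inv_cons l w : word_inv (l :: w) = word_inv w ++ [letter_inv l].
Proof. reflexivity. Qed.

Lemma word_inv_app u v : word_inv (u ++ v) = word_inv v ++ word_inv u.
Proof. unfold word_inv; now rewrite map_app, rev_app_distr. Qed.

Lemma word_invK w : word_inv (word_inv w) = w.
Proof.
  unfold word_inv; rewrite map_rev, rev_involutive, map_map.
  induction w as [|x w IH]; simpl; now rewrite ?letter_invK, ?IH.
Qed.

Lemma word_inv_nil w : word_inv w = [] -> w = [].
Proof. destruct w; auto; rewrite word_inv_cons; now destruct (word_inv w). Qed.

Lemma hd_app_nonnil (u v : list letter) : u <> [] -> hd ltr0 (u ++ v) = hd ltr0 u.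
Proof. now destruct u. Qed.

Lemma last_app_nonnil (u v : list letter) : v <> [] -> last (u ++ v) ltr0 = last v ltr0.
Proof.
  intros Hv; destruct (exists_last Hv) as [v' [x ->]].
  now rewrite app_assoc, !last_last.
Qed.

Lemma hd_word_inv w : w <> [] -> hd ltr0 (word_inv w) = letter_inv (last w ltr0).
Proof.
  intros H; destruct (exists_last H) as [w' [y ->]].
  now rewrite word_inv_app, last_last.
Qed.

Lemma last_word_inv w : w <> [] -> last (word_inv w) ltr0 = letter_inv (hd ltr0 w).
Proof.
  destruct w as [|x w]; [congruence|]; intros _.
  rewrite word_inv_cons, last_app_nonnil; [reflexivity|discriminate].
Qed.

Lemma last_repeat (l : letter) n : last (repeat l (S n)) ltr0 = l.
Proof. simpl repeat; now rewrite repeat_cons, last_last. Qed.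

Lemma split_repeat_prefix (m : letter) k :
  exists i k1, k = repeat m i ++ k1 /\ (k1 <> [] -> hd ltr0 k1 <> m).
Proof.
  induction k as [|x k [i [k1 [-> H]]]]; [now exists O, []|].
  destruct (classic (x = m)) as [->|E]; [now exists (S i), k1|].
  exists O, (x :: repeat m i ++ k1); split; auto.
Qed.

Lemma split_repeat_suffix (m : letter) k :
  exists k2 j, k = k2 ++ repeat m j /\ (k2 <> [] -> last k2 ltr0 <> m).
Proof.
  induction k as [|x k [k2 [j [-> H]]]] using rev_ind; [now exists [], O|].
  destruct (classic (x = m)) as [->|E].
  - exists k2, (S j); split; auto; now rewrite <- app_assoc, <- repeat_cons.
  - exists (k2 ++ repeat m j ++ [x]), O; rewrite app_nil_r, app_assoc; split; auto.
    intros _; now rewrite last_last.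
Qed.

Lemma split_repeat_ends (m m' : letter) k : exists i k2 j,
  k = repeat m i ++ k2 ++ repeat m' j /\
  (k2 <> [] -> hd ltr0 k2 <> m) /\ (k2 <> [] -> last k2 ltr0 <> m') /\
  (i <= length k)%nat /\ (j <= length k)%nat.
Proof.
  destruct (split_repeat_prefix m k) as [i [k1 [Hk Hk1]]].
  destruct (split_repeat_suffix m' k1) as [k2 [j [-> Hk2]]].
  exists i, k2, j; repeat split; auto.
  - intros Hne; rewrite <- (hd_app_nonnil k2 (repeat m' j) Hne); apply Hk1.
    intros E; apply app_eq_nil in E; tauto.
  - rewrite Hk, !length_app, !repeat_length; lia.
  - rewrite Hk, !length_app, !repeat_length; lia.
Qed.

Definition joinable (u v : list letter) : Prop := hd ltr0 v <> letter_inv (last u ltr0).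

Lemma joinable_word_inv u v : u <> [] -> v <> [] ->
  joinable u v -> joinable (word_inv v) (word_inv u).
Proof.
  intros Hu Hv; unfold joinable; rewrite hd_word_inv, last_word_inv by auto.
  intros H E; apply letter_inv_inj in E; apply H; now rewrite E, letter_invK.
Qed.

Lemma no_cancel_iff (l l' : letter) :
  ~ (fst l = fst l' /\ snd l <> snd l') <-> l' <> letter_inv l.
Proof.
  destruct l as [x []], l' as [y []]; unfold letter_inv; simpl;
  destruct x, y; intuition congruence.
Qed.

Lemma reduced_cons_cons l l' w :
  reduced (l :: l' :: w) <-> l' <> letter_inv l /\ reduced (l' :: w).
Proof. cbn [reduced]; now rewrite no_cancel_iff. Qed.

Lemma reduced_tail l w : reduced (l :: w) -> reduced w.
Proof. destruct w; simpl; tauto. Qed.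

Lemma reduced_app u v : reduced u -> reduced v ->
  (u <> [] -> v <> [] -> joinable u v) -> reduced (u ++ v).
Proof.
  induction u as [|x u IH]; intros Hu Hv Hj; simpl; auto.
  destruct u as [|y u].
  - destruct v as [|z v]; auto. apply reduced_cons_cons; split; auto.
    apply Hj; discriminate.
  - apply reduced_cons_cons in Hu as [Hxy Hu].
    change (reduced (x :: y :: (u ++ v))); apply reduced_cons_cons; split; auto.
    apply IH; auto; intros _; apply Hj; discriminate.
Qed.

Lemma reduced_app_l u v : reduced (u ++ v) -> reduced u.
Proof.
  induction u as [|x u IH]; simpl; auto; intros H.
  destruct u as [|y u]; auto.
  change (reduced (x :: y :: (u ++ v))) in H; apply reduced_cons_cons in H as [H1 H2].
  apply reduced_cons_cons; split; auto.
Qed.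

Lemma reduced_app_r u v : reduced (u ++ v) -> reduced v.
Proof. induction u as [|x u IH]; simpl; auto; intros H; apply IH, (reduced_tail x), H. Qed.

Lemma reduced_word_inv w : reduced w -> reduced (word_inv w).
Proof.
  induction w as [|x w IH]; intros H; [exact I|].
  rewrite word_inv_cons; apply reduced_app; [apply IH, (reduced_tail x), H | exact I|].
  intros Hne _; destruct w as [|y w]; [now exfalso; apply Hne|].
  apply reduced_cons_cons in H as [H _].
  unfold joinable; rewrite last_word_inv by discriminate; simpl.
  intros E; apply letter_inv_inj in E; subst; apply H; now rewrite letter_invK.
Qed.

Lemma reduced_repeat (l : letter) n : reduced (repeat l n).
Proof.
  induction n as [|[|n] IH]; simpl; auto.
  apply reduced_cons_cons; split; auto; apply not_eq_sym, letter_inv_neq.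
Qed.

Definition cyc_reduced (w : list letter) : Prop :=
  w <> [] /\ reduced w /\ joinable w w.

Lemma cyclic_reduction w : w <> [] -> reduced w ->
  exists c w', w = c ++ w' ++ word_inv c /\ cyc_reduced w'.
Proof.
  remember (length w) as n eqn:Hn; revert w Hn.
  induction n as [n IH] using lt_wf_ind; intros w Hn Hne Hr.
  destruct (classic (joinable w w)) as [Hc|Hc];
    [exists [], w; simpl; rewrite app_nil_r; now repeat split|].
  unfold joinable in Hc; apply NNPP in Hc.
  destruct w as [|l [|m w]]; [congruence| |].
  - simpl in Hc; symmetry in Hc; now apply letter_inv_neq in Hc.
  - assert (Hne1 : m :: w <> []) by discriminate.
    destruct (exists_last Hne1) as [mid [l' Heq]]; rewrite Heq in *; clear Heq Hne1.
    assert (Hl' : l' = letter_inv l).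
    { rewrite app_comm_cons, last_last in Hc; simpl in Hc.
      now rewrite Hc, letter_invK. }
    subst l'.
    assert (Hmid : mid <> []).
    { intros ->; apply reduced_cons_cons in Hr as [Hr _]; now apply Hr. }
    assert (Hrm : reduced mid)
      by exact (reduced_app_l _ _ (reduced_tail l _ Hr)).
    destruct (IH (length mid)) with (w := mid) as [c [w' [Hc' Hw']]]; auto.
    { rewrite Hn; simpl; rewrite length_app; simpl; lia. }
    exists (l :: c), w'; split; auto.
    rewrite word_inv_cons, Hc'; simpl; now rewrite !app_assoc.
Qed.

Definition comm_word : list letter := [(true, true); (false, true); (true, false); (false, false)].

Lemma reduced_comm_word : reduced comm_word.
Proof. repeat (apply reduced_cons_cons; split; [discriminate|]); exact I. Qed.

Section GroupLemmas.
Variable G : Grp.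

Lemma gmulgV (x : G) : gmul G x (ginv G x) = gone G.
Proof.
  rewrite <- (gmul1 G (gmul G x (ginv G x))), <- (gmulV G (ginv G x)) at 1.
  rewrite <- gmulA, (gmulA G (ginv G x) x), gmulV, gmul1; apply gmulV.
Qed.

Lemma gmulg1 (x : G) : gmul G x (gone G) = x.
Proof. now rewrite <- (gmulV G x), gmulA, gmulgV, gmul1. Qed.

Lemma gmul_cancel_l (z x y : G) : gmul G z x = gmul G z y -> x = y.
Proof. intros H; now rewrite <- (gmul1 G x), <- (gmul1 G y), <- (gmulV G z), <- !gmulA, H. Qed.

Lemma gmul_cancel_r (z x y : G) : gmul G x z = gmul G y z -> x = y.
Proof. intros H; now rewrite <- (gmulg1 x), <- (gmulg1 y), <- (gmulgV z), !gmulA, H. Qed.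

Lemma ginv_unique (x y : G) : gmul G x y = gone G -> y = ginv G x.
Proof. intros H; apply (gmul_cancel_l x); now rewrite H, gmulgV. Qed.

Lemma ginv_mul (x y : G) : ginv G (gmul G x y) = gmul G (ginv G y) (ginv G x).
Proof.
  symmetry; apply ginv_unique.
  now rewrite <- gmulA, (gmulA G y), gmulgV, gmul1, gmulgV.
Qed.

Lemma ginvK (x : G) : ginv G (ginv G x) = x.
Proof. symmetry; apply ginv_unique, gmulV. Qed.

Lemma ginv1 : ginv G (gone G) = gone G.
Proof. symmetry; apply ginv_unique, gmul1. Qed.

Definition gconj (c x : G) : G := gmul G c (gmul G x (ginv G c)).
Definition gcomm (u v : G) : G := gmul G u (gmul G v (gmul G (ginv G u) (ginv G v))).

Lemma ginv_gconj (c x : G) : ginv G (gconj c x) = gconj c (ginv G x).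
Proof. unfold gconj; now rewrite !ginv_mul, ginvK, gmulA. Qed.


Lemma gconj_invK (c x : G) : gconj (ginv G c) (gconj c x) = x.
Proof.
  unfold gconj; rewrite ginvK, !gmulA, gmulV, gmul1, <- gmulA, gmulV; apply gmulg1.
Qed.


Lemma gconj_eq1 (c x : G) : gconj c x = gone G -> x = gone G.
Proof.
  intros H; apply (gmul_cancel_l c); rewrite gmulg1.
  apply (gmul_cancel_r (ginv G c)); unfold gconj in H; now rewrite <- gmulA, H, gmulgV.
Qed.

Lemma gletter_inv (a b : G) l : gletter G a b (letter_inv l) = ginv G (gletter G a b l).
Proof. destruct l as [x []]; unfold gletter; simpl; auto; now rewrite ginvK. Qed.

Lemma geval_app (a b : G) u v :
  geval G a b (u ++ v) = gmul G (geval G a b u) (geval G a b v).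
Proof. induction u; simpl; [now rewrite gmul1 | now rewrite IHu, gmulA]. Qed.

Lemma geval_word_inv (a b : G) w : geval G a b (word_inv w) = ginv G (geval G a b w).
Proof.
  induction w as [|x w IH]; simpl; [now rewrite ginv1|].
  rewrite word_inv_cons, geval_app, IH, ginv_mul; simpl.
  now rewrite gletter_inv, gmulg1.
Qed.

Lemma geval_repeat_add (a b : G) l n m :
  geval G a b (repeat l (n + m)) =
  gmul G (geval G a b (repeat l n)) (geval G a b (repeat l m)).
Proof. now rewrite repeat_app, geval_app. Qed.

Lemma geval_repeat_cancel (a b : G) l n :
  gmul G (geval G a b (repeat l n)) (geval G a b (repeat (letter_inv l) n)) = gone G.
Proof.
  assert (H : forall r, geval G a b (repeat l n ++ repeat (letter_inv l) n ++ r) = geval G a b r).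
  { induction n as [|n IH]; intros r; simpl; auto.
    replace (letter_inv l :: repeat (letter_inv l) n ++ r)
      with (repeat (letter_inv l) n ++ letter_inv l :: r)
      by now rewrite app_comm_cons, repeat_cons, <- app_assoc.
    rewrite IH; simpl.
    now rewrite gletter_inv, gmulA, gmulgV, gmul1. }
  rewrite <- geval_app, <- (app_nil_r (repeat (letter_inv l) n)); apply H.
Qed.

Lemma geval_comm_word (a b : G) : geval G a b comm_word = gcomm a b.
Proof. unfold comm_word, gcomm; simpl; now rewrite gmulg1. Qed.


Lemma reduced_letter_mul (a b : G) l k : reduced k ->
  exists k', reduced k' /\ geval G a b k' = gmul G (gletter G a b l) (geval G a b k).
Proof.
  intros Hk; destruct k as [|l' k]; [exists [l]; split; [exact I | reflexivity]|].
  destruct (classic (l' = letter_inv l)) as [->|E].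
  - exists k; split; [exact (reduced_tail _ _ Hk)|]; simpl.
    now rewrite gletter_inv, gmulA, gmulgV, gmul1.
  - exists (l :: l' :: k); split; [now apply reduced_cons_cons | reflexivity].
Qed.

End GroupLemmas.

Lemma hom_one G H f : is_hom G H f -> f (gone G) = gone H.
Proof. intros Hf; apply (gmul_cancel_l H (f (gone G))); now rewrite <- Hf, gmul1, gmulg1. Qed.

Lemma hom_inv G H f : is_hom G H f -> forall x, f (ginv G x) = ginv H (f x).
Proof. intros Hf x; apply ginv_unique; rewrite <- Hf, gmulgV; now apply hom_one. Qed.

Lemma hom_geval G H f : is_hom G H f ->
  forall a b w, f (geval G a b w) = geval H (f a) (f b) w.
Proof.
  intros Hf a b w; induction w as [|l w IH]; simpl; [now apply hom_one|].
  rewrite Hf, IH; f_equal; unfold gletter; destruct (fst l), (snd l); auto; now apply hom_inv.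
Qed.

(** * Semigroups, subgroups, quotients and directed unions *)

Definition positive_word (u : list bool) : list letter := map (fun x => (x, true)) u.

Lemma peval_positive_word (G : Grp) (a b : G) u : peval G a b u = geval G a b (positive_word u).
Proof. induction u as [|[] u IH]; simpl; now rewrite ?IH. Qed.

Lemma reduced_positive_word u : reduced (positive_word u).
Proof.
  induction u as [|x [|y u] IH]; [exact I | exact I |].
  change (reduced ((x, true) :: (y, true) :: positive_word u)).
  apply reduced_cons_cons; split; [discriminate | exact IH].
Qed.

(* Two distinct positive words with equal values can be cut down to ones ending
   in different letters; then [u v^-1] is a nontrivial reduced relation. *)
Lemma free_semigroup_of_free_pair (G : Grp) (a b : G) :
  free_pair G a b -> free_semigroup_pair G a b.
Proof.
  intros Hf u v _ _; rewrite !peval_positive_word.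
  remember (length u + length v)%nat as n eqn:Hn; revert u v Hn.
  induction n as [n IH] using (well_founded_induction lt_wf); intros u v Hn Huv Heq.
  destruct (list_eq_dec bool_dec u []) as [->|Hu].
  { apply (Hf (positive_word v)); [destruct v; [congruence|discriminate]|
      apply reduced_positive_word|now rewrite <- Heq]. }
  destruct (list_eq_dec bool_dec v []) as [->|Hv].
  { apply (Hf (positive_word u)); [destruct u; [congruence|discriminate]|
      apply reduced_positive_word|now rewrite Heq]. }
  destruct (exists_last Hu) as [u1 [x ->]], (exists_last Hv) as [v1 [y ->]].
  unfold positive_word in Heq; rewrite !map_app, !geval_app in Heq; simpl in Heq.
  destruct (bool_dec x y) as [<-|Hxy].
  - apply gmul_cancel_r in Heq.
    apply (IH (length u1 + length v1)%nat) with u1 v1; auto.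
    + rewrite Hn, !length_app; simpl; lia.
    + intros ->; now apply Huv.
  - apply (Hf (positive_word (u1 ++ [x]) ++ word_inv (positive_word (v1 ++ [y])))).
    + destruct u1; discriminate.
    + apply reduced_app; [apply reduced_positive_word|apply reduced_word_inv, reduced_positive_word|].
      intros _ _; unfold joinable; rewrite hd_word_inv by (destruct v1; discriminate).
      unfold positive_word; rewrite !map_app; simpl map; rewrite !last_last.
      intros E; injection E; intros; now apply Hxy.
    + rewrite geval_app, geval_word_inv; unfold positive_word; rewrite !map_app, !geval_app; simpl.
      rewrite Heq; apply gmulgV.
Qed.

Lemma no_free_NS (G : Grp) : NS G -> ~ has_nonab_free_subgroup G.
Proof. intros HNS [a [b Hf]]; apply HNS; exists a, b; now apply free_semigroup_of_free_pair. Qed.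

Lemma free_pair_hom_image (G H : Grp) (f : G -> H) (a b : G) :
  is_hom G H f -> free_pair H (f a) (f b) -> free_pair G a b.
Proof.
  intros Hf Hab w Hw Hr E; apply (Hab w Hw Hr).
  now rewrite <- hom_geval, E by auto; apply hom_one.
Qed.

Lemma no_free_sub (G H : Grp) (f : G -> H) : is_hom G H f -> (forall x y, f x = f y -> x = y) ->
  ~ has_nonab_free_subgroup H -> ~ has_nonab_free_subgroup G.
Proof.
  intros Hf Hi HH [a [b Hab]]; apply HH; exists (f a), (f b); intros w Hw Hr E.
  rewrite <- hom_geval, <- (hom_one G H f) in E by auto.
  exact (Hab w Hw Hr (Hi _ _ E)).
Qed.

Lemma no_free_image (G H : Grp) (f : G -> H) : is_hom G H f -> (forall y, exists x, f x = y) ->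
  ~ has_nonab_free_subgroup G -> ~ has_nonab_free_subgroup H.
Proof.
  intros Hf Hs HG [a [b Hab]]; apply HG.
  destruct (Hs a) as [a' <-], (Hs b) as [b' <-].
  exists a', b'; exact (free_pair_hom_image G H f a' b' Hf Hab).
Qed.

Lemma no_free_dirunion (G : Grp) (I : Type) (Gi : I -> Grp) (j : forall k, Gi k -> G) :
  (forall k, is_hom (Gi k) G (j k)) ->
  (forall k1 k2, exists k3,
      (forall x, exists y, j k3 y = j k1 x) /\ (forall x, exists y, j k3 y = j k2 x)) ->
  (forall g, exists k x, j k x = g) ->
  (forall k, ~ has_nonab_free_subgroup (Gi k)) -> ~ has_nonab_free_subgroup G.
Proof.
  intros Hh Hd Hc HF [a [b Hab]].
  destruct (Hc a) as [k1 [x <-]], (Hc b) as [k2 [y <-]].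
  destruct (Hd k1 k2) as [k3 [H1 H2]].
  destruct (H1 x) as [x' Hx'], (H2 y) as [y' Hy']; rewrite <- Hx', <- Hy' in Hab.
  apply (HF k3); exists x', y'; exact (free_pair_hom_image _ _ _ x' y' (Hh k3) Hab).
Qed.

(** * Extensions *)

Definition good_conjugator (w z : list letter) : Prop :=
  cyc_reduced w /\ z <> [] /\ reduced z /\
  joinable z w /\ joinable z (word_inv w) /\ joinable (word_inv z) w /\ joinable w z.

Lemma good_conjugator_ends w z : cyc_reduced w -> z <> [] -> reduced z ->
  hd ltr0 z <> hd ltr0 w -> hd ltr0 z <> letter_inv (last w ltr0) ->
  last z ltr0 <> letter_inv (hd ltr0 w) -> last z ltr0 <> last w ltr0 ->
  good_conjugator w z.
Proof.
  intros Hw Hz Hrz H1 H2 H3 H4; pose proof Hw as [Hwne _].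
  split; [exact Hw|]; split; [exact Hz|]; split; [exact Hrz|].
  unfold joinable; rewrite hd_word_inv, last_word_inv by auto.
  repeat split; intros E.
  - apply H3; now rewrite E, letter_invK.
  - apply letter_inv_inj in E; now apply H4.
  - apply H1; now rewrite E, letter_invK.
  - now apply H2.
Qed.

Lemma good_conjugator_pair w : cyc_reduced w -> exists t1 t2, good_conjugator w [t1; t2].
Proof.
  intros Hw.
  destruct (letter_avoid2 (hd ltr0 w) (letter_inv (last w ltr0))) as [t1 [H1 H2]].
  destruct (letter_avoid3 (letter_inv t1) (letter_inv (hd ltr0 w)) (last w ltr0))
    as [t2 [H3 [H4 H5]]].
  exists t1, t2; apply good_conjugator_ends; auto; [discriminate|].
  apply reduced_cons_cons; split; [exact H3 | exact I].
Qed.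

Section Expand.
Variables w z : list letter.
Hypothesis Hwz : good_conjugator w z.

Definition is_Y (l : letter) : bool := negb (fst l).
Definition wpow (e : bool) : list letter := if e then w else word_inv w.

(* [expand s v] spells [v] with the letters [X ^ e] replaced by [w ^ e] and [Y ^ e]
   by [z w ^ e z^-1]; the [z^-1 z] between two consecutive [Y]-letters is dropped.
   The flag [s] records that the previous letter was a [Y], whose closing [z^-1]
   has not been written yet. *)
Definition expand_prefix (s : bool) (l : letter) : list letter :=
  if is_Y l then (if s then [] else z) else (if s then word_inv z else []).

Fixpoint expand (s : bool) (v : list letter) : list letter :=
  match v with
  | [] => if s then word_inv z else []
  | l :: v' => expand_prefix s l ++ wpow (snd l) ++ expand (is_Y l) v'
  end.

Let Hw : w <> [] := proj1 (proj1 Hwz).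
Let Hz : z <> [] := proj1 (proj2 Hwz).
Let Hrz : reduced z := proj1 (proj2 (proj2 Hwz)).

Lemma word_inv_z_nonnil : word_inv z <> [].
Proof. intros E; now apply Hz, word_inv_nil. Qed.

Lemma wpow_nonnil e : wpow e <> [].
Proof. destruct e; simpl; auto; intros E; now apply Hw, word_inv_nil. Qed.

Lemma reduced_wpow e : reduced (wpow e).
Proof. pose proof Hwz as [[_ [Hr _]] _]; destruct e; simpl; auto; now apply reduced_word_inv. Qed.

Lemma joinable_z_wpow e : joinable z (wpow e).
Proof. pose proof Hwz as [_ [_ [_ [H1 [H2 _]]]]]; now destruct e. Qed.

Lemma joinable_z_inv_wpow e : joinable (word_inv z) (wpow e).
Proof.
  pose proof Hwz as [_ [_ [_ [_ [_ [H3 H4]]]]]]; destruct e; auto.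
  now apply joinable_word_inv.
Qed.

Lemma joinable_wpow_wpow e : joinable (wpow e) (wpow e).
Proof.
  pose proof Hwz as [[_ [_ H]] _]; destruct e; auto.
  now apply joinable_word_inv.
Qed.

Lemma joinable_wpow_z e : joinable (wpow e) z.
Proof.
  pose proof Hwz as [_ [_ [_ [_ [_ [H3 H4]]]]]]; destruct e; auto; simpl.
  rewrite <- (word_invK z); apply joinable_word_inv; auto using word_inv_z_nonnil.
Qed.

Lemma joinable_wpow_z_inv e : joinable (wpow e) (word_inv z).
Proof.
  pose proof Hwz as [_ [_ [_ [H1 [H2 _]]]]]; destruct e; simpl.
  - rewrite <- (word_invK w) at 1; apply joinable_word_inv; auto; exact (wpow_nonnil false).
  - now apply joinable_word_inv.
Qed.

Lemma prefix_wpow_nonnil s l : expand_prefix s l ++ wpow (snd l) <> [].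
Proof. intros E; apply app_eq_nil in E; exact (wpow_nonnil _ (proj2 E)). Qed.

Lemma expand_cons_nonnil s l v : expand s (l :: v) <> [].
Proof.
  simpl; rewrite app_assoc; intros E; apply app_eq_nil in E.
  exact (prefix_wpow_nonnil s l (proj1 E)).
Qed.

Lemma hd_expand_cons s l v :
  hd ltr0 (expand s (l :: v)) = hd ltr0 (expand_prefix s l ++ wpow (snd l)).
Proof. simpl; rewrite app_assoc; apply hd_app_nonnil, prefix_wpow_nonnil. Qed.

Lemma joinable_wpow_expand l v : reduced (l :: v) ->
  expand (is_Y l) v <> [] -> joinable (wpow (snd l)) (expand (is_Y l) v).
Proof.
  intros Hr Hne; destruct v as [|l' v].
  - simpl in Hne |- *; destruct (is_Y l); [apply joinable_wpow_z_inv | now contradict Hne].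
  - apply reduced_cons_cons in Hr as [Hll' _].
    unfold joinable; rewrite hd_expand_cons; unfold expand_prefix, is_Y.
    destruct (fst l) eqn:El, (fst l') eqn:El'; simpl.
    + rewrite <- (letter_same_kind l l'); [apply joinable_wpow_wpow | auto | congruence].
    + rewrite hd_app_nonnil by apply Hz; apply joinable_wpow_z.
    + rewrite hd_app_nonnil by apply word_inv_z_nonnil; apply joinable_wpow_z_inv.
    + rewrite <- (letter_same_kind l l'); [apply joinable_wpow_wpow | auto | congruence].
Qed.

Lemma reduced_expand s v : reduced v -> reduced (expand s v).
Proof.
  revert s; induction v as [|l v IH]; intros s Hv.
  - destruct s; [now apply reduced_word_inv | exact I].
  - pose proof (IH (is_Y l) (reduced_tail l v Hv)) as Hrv.
    simpl; apply reduced_app; [| apply reduced_app; auto using reduced_wpow |].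
    + unfold expand_prefix; destruct (is_Y l), s; simpl; auto using reduced_word_inv.
    + intros _ Hne; now apply joinable_wpow_expand.
    + intros Hne _; unfold joinable; rewrite hd_app_nonnil by apply wpow_nonnil.
      fold (joinable (expand_prefix s l) (wpow (snd l))); unfold expand_prefix in *; destruct (is_Y l), s;
        try (now contradict Hne); auto using joinable_z_wpow, joinable_z_inv_wpow.
Qed.

End Expand.

Lemma geval_expand (G : Grp) (a b : G) w z s v :
  let Z := geval G a b z in
  let V := geval G (geval G a b w) (gconj G Z (geval G a b w)) v in
  geval G a b (expand w z s v) = if s then gmul G (ginv G Z) V else V.
Proof.
  intros Z; revert s; induction v as [|[t e] v IH]; intros s; simpl.
  - destruct s; simpl; [now rewrite geval_word_inv, gmulg1 | reflexivity].
  - set (X := geval G a b w); set (V := geval G X (gconj G Z X) v).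
    rewrite !geval_app, IH; fold X V.
    assert (HX : geval G a b (wpow w e) = if e then X else ginv G X)
      by (destruct e; simpl; now rewrite ?geval_word_inv).
    rewrite HX; unfold expand_prefix, is_Y, gletter; simpl.
    destruct t, e, s; simpl; rewrite ?geval_word_inv, ?ginv_gconj; fold Z; unfold gconj;
      rewrite ?gmul1, <- ?gmulA; try reflexivity.
    all: now rewrite (gmulA G (ginv G Z) Z), gmulV, gmul1.
Qed.

Lemma expand_nonnil w z s v : good_conjugator w z -> v <> [] -> expand w z s v <> [].
Proof. intros Hwz Hv; destruct v; [congruence | apply expand_cons_nonnil, Hwz]. Qed.

Lemma free_pair_conj (G : Grp) (a b : G) w z : free_pair G a b -> good_conjugator w z ->
  free_pair G (geval G a b w) (gconj G (geval G a b z) (geval G a b w)).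
Proof.
  intros Hf Hwz v Hv Hr E.
  apply (Hf (expand w z false v)); auto using expand_nonnil, reduced_expand.
  now rewrite geval_expand.
Qed.

(* If [a, b] are free in [G] but [p a, p b] satisfy a relation [c w c^-1] with [w]
   cyclically reduced, then [w] and a conjugate of [w] freely generate a subgroup
   of the kernel. *)
Lemma no_free_ext (G N Q : Grp) (i : N -> G) (p : G -> Q) :
  is_hom N G i -> is_hom G Q p ->
  (forall g, p g = gone Q <-> exists n, i n = g) ->
  ~ has_nonab_free_subgroup N -> ~ has_nonab_free_subgroup Q -> ~ has_nonab_free_subgroup G.
Proof.
  intros Hi Hp Hk HN HQ [a [b Hab]].
  assert (Hrel : exists w, w <> [] /\ reduced w /\ geval Q (p a) (p b) w = gone Q).
  { apply NNPP; intros H; apply HQ; exists (p a), (p b); intros w Hw Hr E; apply H; eauto. }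
  destruct Hrel as [w0 [Hw0 [Hr0 Hev]]].
  destruct (cyclic_reduction w0 Hw0 Hr0) as [c [w [-> Hw]]].
  destruct (good_conjugator_pair w Hw) as [t1 [t2 Hwz]].
  pose proof (free_pair_conj G a b w [t1; t2] Hab Hwz) as Hfree.
  set (X := geval G a b w) in Hfree; set (Z := geval G a b [t1; t2]) in Hfree.
  assert (HX : p X = gone Q).
  { rewrite <- hom_geval, !geval_app, geval_word_inv, !Hp, hom_inv in Hev by auto.
    exact (gconj_eq1 Q _ _ Hev). }
  assert (HY : p (gconj G Z X) = gone Q).
  { unfold gconj; rewrite !Hp, HX, hom_inv, gmul1, gmulgV by auto; reflexivity. }
  apply Hk in HX as [n1 Hn1]; apply Hk in HY as [n2 Hn2].
  apply HN; exists n1, n2; rewrite <- Hn2, <- Hn1 in Hfree.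
  exact (free_pair_hom_image N G i n1 n2 Hi Hfree).
Qed.

Lemma reduced_padded_word (rho ell' ell lam : letter) k2 i j :
  ell' <> letter_inv rho -> fst ell <> fst ell' -> fst ell <> fst lam -> reduced k2 ->
  (k2 <> [] -> hd ltr0 k2 <> letter_inv ell') -> (k2 <> [] -> last k2 ltr0 <> letter_inv ell) ->
  reduced (rho :: repeat ell' (S i) ++ k2 ++ repeat ell (S j) ++ [lam]).
Proof.
  intros Hrho Hell Hlam Hrk2 Hk2h Hk2l.
  change (reduced ([rho] ++ repeat ell' (S i) ++ k2 ++ repeat ell (S j) ++ [lam])).
  apply reduced_app; [exact I| |intros _ _; exact Hrho].
  apply reduced_app; [apply reduced_repeat| |].
  - apply reduced_app; [exact Hrk2| |].
    + apply reduced_app; [apply reduced_repeat | exact I|].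
      intros _ _; unfold joinable; rewrite last_repeat; now apply letter_kind_neq.
    + intros Hne _; unfold joinable; simpl; intros E; apply (Hk2l Hne).
      now rewrite E, letter_invK.
  - intros _ _; unfold joinable; rewrite last_repeat; destruct k2 as [|x k2]; simpl.
    + now apply letter_kind_neq, not_eq_sym.
    + intros E; apply (Hk2h ltac:(discriminate)); simpl; now rewrite E.
Qed.

(* Padding [k] with long powers of [ell'] and [ell] absorbs any cancellation of [k]
   against its neighbours. *)
Lemma pumped_word (G : Grp) (a b : G) (rho ell' ell lam : letter) (k : list letter) :
  reduced k -> ell' <> letter_inv rho -> fst ell <> fst ell' -> fst ell <> fst lam ->
  let M := S (length k) in
  exists z, z <> [] /\ reduced z /\ hd ltr0 z = rho /\ last z ltr0 = lam /\
    geval G a b z = gmul G (gletter G a b rho) (gmul G (geval G a b (repeat ell' M))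
      (gmul G (geval G a b k) (gmul G (geval G a b (repeat ell M)) (gletter G a b lam)))).
Proof.
  intros Hk Hrho Hell Hlam M.
  destruct (split_repeat_ends (letter_inv ell') (letter_inv ell) k)
    as [i [k2 [j [Hke [Hk2h [Hk2l [Hi Hj]]]]]]].
  set (mi := S (length k - i)); set (mj := S (length k - j)).
  assert (Hrk2 : reduced k2) by (rewrite Hke in Hk; exact (reduced_app_l _ _ (reduced_app_r _ _ Hk))).
  exists (rho :: repeat ell' mi ++ k2 ++ repeat ell mj ++ [lam]).
  split; [discriminate|]; split; [now apply reduced_padded_word|].
  split; [reflexivity|]; split; [now rewrite app_comm_cons, !app_assoc, last_last|].
  assert (E1 : geval G a b (repeat ell' M) =
               gmul G (geval G a b (repeat ell' mi)) (geval G a b (repeat ell' i)))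
    by (replace M with (mi + i)%nat by (unfold mi, M; lia); apply geval_repeat_add).
  assert (E2 : geval G a b (repeat ell M) =
               gmul G (geval G a b (repeat ell j)) (geval G a b (repeat ell mj)))
    by (replace M with (j + mj)%nat by (unfold mj, M; lia); apply geval_repeat_add).
  pose proof (geval_repeat_cancel G a b (letter_inv ell) j) as E3; rewrite letter_invK in E3.
  rewrite E1, E2, Hke; cbn [geval]; rewrite !geval_app; cbn [geval]; rewrite gmulg1.
  f_equal; rewrite <- !gmulA; f_equal.
  rewrite (gmulA G (geval G a b (repeat ell' i))), geval_repeat_cancel, gmul1; f_equal.
  now rewrite (gmulA G (geval G a b (repeat (letter_inv ell) j))), E3, gmul1.
Qed.

Definition is_glb (E : R -> Prop) (q : R) : Prop := is_lub (fun t => E (- t)) (- q).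

Lemma is_glb_lower E q y : is_glb E q -> E y -> q <= y.
Proof. intros [Hub _] Hy; assert (- y <= - q) by (apply Hub; now rewrite Ropp_involutive); lra. Qed.

Lemma is_glb_greatest E q c : is_glb E q -> (forall y, E y -> c <= y) -> c <= q.
Proof.
  intros [_ Hl] Hc; assert (- q <= - c); [|lra].
  apply Hl; intros t Ht; specialize (Hc _ Ht); lra.
Qed.

Lemma glb_exists (E : R -> Prop) x0 x1 : E x1 -> (forall y, E y -> x0 <= y) ->
  exists q, is_glb E q.
Proof.
  intros H1 H0; destruct (completeness (fun t => E (- t))) as [m Hm].
  - exists (- x0); intros t Ht; specialize (H0 _ Ht); lra.
  - exists (- x1); now rewrite Ropp_involutive.
  - exists (- m); unfold is_glb; now rewrite Ropp_involutive.
Qed.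

Lemma lub_approx (E : R -> Prop) p e : is_lub E p -> ~ E p -> e > 0 ->
  exists y, E y /\ p - e < y < p.
Proof.
  intros [Hub Hl] Hn He; apply NNPP; intros H.
  assert (Hb : is_upper_bound E (p - e)).
  { intros y Hy; destruct (Rle_or_lt y (p - e)); auto; exfalso; apply H.
    exists y; repeat split; auto; destruct (Rle_lt_or_eq_dec y p (Hub y Hy)); auto.
    subst; contradiction. }
  specialize (Hl _ Hb); lra.
Qed.

Lemma glb_approx (E : R -> Prop) q e : is_glb E q -> ~ E q -> e > 0 ->
  exists y, E y /\ q < y < q + e.
Proof.
  intros Hq Hn He; destruct (lub_approx _ _ e Hq) as [t [Ht Hti]]; auto.
  - now rewrite Ropp_involutive.
  - exists (- t); split; auto; lra.
Qed.

Lemma finite_of_injective_code {C : Type} (P : R -> Prop) (code : R -> C -> Prop)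
  (Lc : list C) : (forall p, P p -> exists c, In c Lc /\ code p c) ->
  (forall c p p', In c Lc -> P p -> P p' -> code p c -> code p' c -> p = p') ->
  exists Ps, forall p, P p -> In p Ps.
Proof.
  intros Hcode Hinj.
  assert (H : forall L, incl L Lc ->
            exists Ps, forall p c, P p -> In c L -> code p c -> In p Ps).
  { induction L as [|c L IH]; intros HL; [now exists []|].
    destruct IH as [Ps HPs]; [intros x Hx; apply HL; now right|].
    destruct (classic (exists p0, P p0 /\ code p0 c)) as [[p0 [HP0 Hc0]]|Hno].
    - exists (p0 :: Ps); intros p c' HP [<-|Hin] Hc; [left|right; eauto].
      apply (Hinj c); auto; apply HL; now left.
    - exists Ps; intros p c' HP [<-|Hin] Hc; [exfalso; apply Hno; eauto | eauto]. }
  destruct (H Lc (incl_refl Lc)) as [Ps HPs]; exists Ps; intros p HP.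
  destruct (Hcode p HP) as [c [Hin Hc]]; eauto.
Qed.

(** * Piecewise linear homeomorphisms of [[0,1]] *)

Lemma in01_0 : in01 0.
Proof. unfold in01; lra. Qed.

Lemma in01_1 : in01 1.
Proof. unfold in01; lra. Qed.

Lemma in01_between p q x : in01 p -> in01 q -> p <= x <= q -> in01 x.
Proof. unfold in01; lra. Qed.

Section PLHomeo.
Variable h : R -> R.
Hypothesis Hh : is_PL_homeo h.

Lemma PL_lt x y : in01 x -> in01 y -> x < y -> h x < h y.
Proof. apply Hh. Qed.

Lemma PL_le x y : in01 x -> in01 y -> x <= y -> h x <= h y.
Proof.
  intros Hx Hy Hxy; destruct (Rle_lt_or_eq_dec _ _ Hxy); [left; now apply PL_lt | subst; lra].
Qed.

Lemma PL_le_rev x y : in01 x -> in01 y -> h x <= h y -> x <= y.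
Proof. intros Hx Hy H; destruct (Rle_or_lt x y); auto; pose proof (PL_lt y x Hy Hx H0); lra. Qed.

Lemma PL_in01 x : in01 x -> in01 (h x).
Proof.
  intros Hx; destruct Hh as [H0 [H1 _]].
  pose proof (PL_le 0 x in01_0 Hx ltac:(unfold in01 in Hx; lra)).
  pose proof (PL_le x 1 Hx in01_1 ltac:(unfold in01 in Hx; lra)).
  unfold in01; lra.
Qed.

End PLHomeo.

Lemma breakpoint_right (xs : nat -> R) n p : xs O <= p -> p < xs n ->
  exists i, (i < n)%nat /\ xs i <= p < xs (S i).
Proof.
  intros H0; induction n as [|n IH]; intros H; [lra|].
  destruct (Rlt_or_le p (xs n)) as [Hl|Hl].
  - destruct (IH Hl) as [i [Hi Hp]]; exists i; split; auto; lia.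
  - exists n; split; auto; lra.
Qed.

Lemma breakpoint_left (xs : nat -> R) n p : xs O < p -> p <= xs n ->
  exists i, (i < n)%nat /\ xs i < p <= xs (S i).
Proof.
  intros H0; induction n as [|n IH]; intros H; [lra|].
  destruct (Rlt_or_le (xs n) p) as [Hl|Hl].
  - exists n; split; auto; lra.
  - destruct (IH Hl) as [i [Hi Hp]]; exists i; split; auto; lia.
Qed.

Lemma breakpoints_increasing (xs : nat -> R) n :
  (forall i, (i < n)%nat -> xs i < xs (S i)) -> forall i j, (i <= j <= n)%nat -> xs i <= xs j.
Proof.
  intros Hinc i j [Hij Hjn]; induction Hij as [|j Hij IH]; [lra|].
  pose proof (Hinc j ltac:(lia)); specialize (IH ltac:(lia)); lra.
Qed.

Definition affine_on (h : R -> R) (A B : R) : Prop :=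
  exists c d, forall x, A <= x <= B -> h x = c * x + d.

Lemma PL_affine_right h p : is_PL_homeo h -> 0 <= p < 1 ->
  exists e, e > 0 /\ p + e <= 1 /\ affine_on h p (p + e).
Proof.
  intros [_ [_ [_ [_ [n [xs [X0 [Xn [Xinc Xaff]]]]]]]]] Hp.
  destruct (breakpoint_right xs n p ltac:(lra) ltac:(lra)) as [i [Hi Hpi]].
  destruct (Xaff i Hi) as [c [d Hcd]].
  pose proof (breakpoints_increasing xs n Xinc (S i) n ltac:(lia)).
  exists (xs (S i) - p); repeat split; try lra.
  exists c, d; intros x Hx; apply Hcd; lra.
Qed.

Lemma PL_affine_left h p : is_PL_homeo h -> 0 < p <= 1 ->
  exists e, e > 0 /\ 0 <= p - e /\ affine_on h (p - e) p.
Proof.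
  intros [_ [_ [_ [_ [n [xs [X0 [Xn [Xinc Xaff]]]]]]]]] Hp.
  destruct (breakpoint_left xs n p ltac:(lra) ltac:(lra)) as [i [Hi Hpi]].
  destruct (Xaff i Hi) as [c [d Hcd]].
  pose proof (breakpoints_increasing xs n Xinc 0 i ltac:(lia)).
  exists (p - xs i); repeat split; try lra.
  exists c, d; intros x Hx; apply Hcd; lra.
Qed.

Lemma affine_two_fixed h A B y1 y2 : affine_on h A B -> A <= y1 < y2 -> y2 <= B ->
  h y1 = y1 -> h y2 = y2 -> forall z, A <= z <= B -> h z = z.
Proof.
  intros [c [d H]] Hy1 Hy2 F1 F2 z Hz.
  rewrite H in F1, F2 by lra; rewrite H by lra.
  assert (Hc : (c - 1) * (y2 - y1) = 0) by lra.
  apply Rmult_integral in Hc as [Hc|Hc]; [|lra].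
  replace c with 1 in * by lra; replace d with 0 by lra; ring.
Qed.

Lemma affine_on_sub h A B A' B' : affine_on h A B -> A <= A' -> B' <= B -> affine_on h A' B'.
Proof. intros [c [d H]] HA HB; exists c, d; intros x Hx; apply H; lra. Qed.

Lemma PL_fix_left_accumulation h p : is_PL_homeo h -> 0 < p <= 1 ->
  (forall e, e > 0 -> exists y, p - e < y < p /\ h y = y) -> h p = p.
Proof.
  intros Hh Hp Hacc; destruct (PL_affine_left h p Hh Hp) as [e [He [_ Haff]]].
  destruct (Hacc e He) as [y2 [Hy2 F2]]; destruct (Hacc (p - y2)) as [y1 [Hy1 F1]]; [lra|].
  apply (affine_two_fixed h (p - e) p y2 y1); auto; lra.
Qed.

Lemma PL_fix_right_accumulation h q : is_PL_homeo h -> 0 <= q < 1 ->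
  (forall e, e > 0 -> exists y, q < y < q + e /\ h y = y) -> h q = q.
Proof.
  intros Hh Hq Hacc; destruct (PL_affine_right h q Hh Hq) as [e [He [_ Haff]]].
  destruct (Hacc e He) as [y1 [Hy1 F1]]; destruct (Hacc (y1 - q)) as [y2 [Hy2 F2]]; [lra|].
  apply (affine_two_fixed h q (q + e) y2 y1); auto; lra.
Qed.

(* [sg = 1] gives the germ on the right of [p], [sg = -1] the germ on the left. *)
Definition linear_germ (sg : R) (h : R -> R) (p s : R) : Prop :=
  exists e, e > 0 /\ forall x, 0 <= sg * (x - p) <= e -> in01 x /\ h x = p + s * (x - p).

Definition germ_side (sg p : R) : Prop := sg = 1 /\ p < 1 \/ sg = -1 /\ 0 < p.

Lemma PL_linear_germ h p sg : is_PL_homeo h -> in01 p -> h p = p -> germ_side sg p ->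
  exists s, s > 0 /\ linear_germ sg h p s.
Proof.
  intros Hh Hp Hfix Hsg; unfold in01 in Hp.
  assert (Hpiece : exists A B, A <= p <= B /\ A < B /\ 0 <= A /\ B <= 1 /\ affine_on h A B /\
                     forall x, 0 <= sg * (x - p) <= B - A -> A <= x <= B).
  { destruct Hsg as [[-> Hp1]|[-> Hp0]].
    - destruct (PL_affine_right h p Hh ltac:(lra)) as [e [He [He1 Haff]]].
      exists p, (p + e); repeat split; auto; try lra; intros x Hx; lra.
    - destruct (PL_affine_left h p Hh ltac:(lra)) as [e [He [He1 Haff]]].
      exists (p - e), p; repeat split; auto; try lra; intros x Hx; lra. }
  destruct Hpiece as [A [B [HpAB [HAB [HA [HB [[c [d Hcd]] Hside]]]]]]].
  assert (Hd : d = p - c * p) by (rewrite Hcd in Hfix by lra; lra).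
  assert (Hc : c > 0).
  { pose proof (PL_lt h Hh A B ltac:(unfold in01; lra) ltac:(unfold in01; lra) HAB).
    rewrite !Hcd in H by lra; nra. }
  exists c; split; auto; exists (B - A); split; [lra|].
  intros x Hx; specialize (Hside x Hx); split; [unfold in01; lra|].
  rewrite Hcd, Hd by lra; ring.
Qed.

Lemma linear_germ_comp sg h1 h2 p s1 s2 :
  linear_germ sg h1 p s1 -> linear_germ sg h2 p s2 -> s2 > 0 ->
  linear_germ sg (fun x => h1 (h2 x)) p (s1 * s2).
Proof.
  intros [e1 [He1 H1]] [e2 [He2 H2]] Hs2.
  exists (Rmin e2 (e1 / s2)); split; [apply Rmin_pos; auto; now apply Rdiv_lt_0_compat|].
  intros x Hx; pose proof (Rmin_l e2 (e1 / s2)); pose proof (Rmin_r e2 (e1 / s2)).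
  destruct (H2 x ltac:(lra)) as [Hin ->]; split; auto.
  assert (Hr : 0 <= sg * (p + s2 * (x - p) - p) <= e1).
  { replace (sg * (p + s2 * (x - p) - p)) with (s2 * (sg * (x - p))) by ring.
    split; [apply Rmult_le_pos; lra|].
    apply Rle_trans with (s2 * (e1 / s2)); [apply Rmult_le_compat_l; lra | right; field; lra]. }
  destruct (H1 _ Hr) as [_ ->]; ring.
Qed.

Lemma linear_germ_ext sg h h' p s : (forall x, in01 x -> h x = h' x) ->
  linear_germ sg h p s -> linear_germ sg h' p s.
Proof.
  intros E [e [He H]]; exists e; split; auto; intros x Hx.
  destruct (H x Hx) as [Hi Hv]; split; auto; now rewrite <- E.
Qed.

Lemma linear_germ_id_slope sg h p s : germ_side sg p ->
  linear_germ sg h p s -> (forall x, in01 x -> h x = x) -> s = 1.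
Proof.
  intros Hsg [e [He H]] Hid.
  assert (Hs2 : sg * sg = 1) by (destruct Hsg as [[-> _]|[-> _]]; ring).
  assert (Hr : 0 <= sg * (p + sg * e - p) <= e)
    by (replace (sg * (p + sg * e - p)) with ((sg * sg) * e) by ring; rewrite Hs2; lra).
  destruct (H _ Hr) as [Hin Hv]; rewrite Hid in Hv by auto.
  assert (Hz : (s - 1) * (sg * e) = 0) by lra.
  apply Rmult_integral in Hz as [Hz|Hz]; [lra|].
  destruct Hsg as [[-> _]|[-> _]]; lra.
Qed.

Section PLAction.
Variable G : Grp.
Variable phi : G -> R -> R.
Hypothesis HPL : forall g, is_PL_homeo (phi g).
Hypothesis Hmul : forall g g' x, in01 x -> phi (gmul G g g') x = phi g (phi g' x).

Lemma act_in01 u x : in01 x -> in01 (phi u x).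
Proof. apply PL_in01, HPL. Qed.

Lemma act_lt u x y : in01 x -> in01 y -> x < y -> phi u x < phi u y.
Proof. apply PL_lt, HPL. Qed.

Lemma act_le u x y : in01 x -> in01 y -> x <= y -> phi u x <= phi u y.
Proof. apply PL_le, HPL. Qed.

Lemma act_le_rev u x y : in01 x -> in01 y -> phi u x <= phi u y -> x <= y.
Proof. apply PL_le_rev, HPL. Qed.

Lemma act_one x : in01 x -> phi (gone G) x = x.
Proof.
  intros Hx; pose proof (Hmul (gone G) (gone G) x Hx) as H; rewrite gmul1 in H.
  pose proof (act_in01 (gone G) x Hx) as Hx'.
  destruct (Rtotal_order (phi (gone G) x) x) as [Hl|[He|Hg]]; auto.
  - pose proof (act_lt (gone G) _ _ Hx' Hx Hl); lra.
  - pose proof (act_lt (gone G) _ _ Hx Hx' Hg); lra.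
Qed.

Lemma act_invl u x : in01 x -> phi (ginv G u) (phi u x) = x.
Proof. intros Hx; now rewrite <- Hmul, gmulV, act_one. Qed.

Lemma act_invr u x : in01 x -> phi u (phi (ginv G u) x) = x.
Proof. intros Hx; now rewrite <- Hmul, gmulgV, act_one. Qed.

Lemma act_fix_inv u x : in01 x -> phi u x = x -> phi (ginv G u) x = x.
Proof. intros Hx H; rewrite <- H at 1; now apply act_invl. Qed.

Lemma act_inv_ge u y : in01 y -> phi u y <= y -> y <= phi (ginv G u) y.
Proof.
  intros Hy H; apply (act_le_rev u); auto using act_in01; now rewrite act_invr.
Qed.

Lemma act_interval u p q y : in01 p -> in01 q -> phi u p = p -> phi u q = q ->
  p < y < q -> p < phi u y < q.
Proof.
  intros Hp Hq Hup Huq Hy; pose proof (in01_between p q) as Hin.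
  split; [rewrite <- Hup at 1 | rewrite <- Huq]; apply act_lt; try apply Hin; auto; lra.
Qed.

Lemma act_interval_inv u p q y : in01 p -> in01 q -> phi u p = p -> phi u q = q ->
  p < y < q -> p < phi (ginv G u) y < q.
Proof. intros Hp Hq Hup Huq; apply act_interval; auto; now apply act_fix_inv. Qed.

Lemma act_gcomm u v x : in01 x ->
  phi (gcomm G u v) x = phi u (phi v (phi (ginv G u) (phi (ginv G v) x))).
Proof. intros Hx; unfold gcomm; rewrite !Hmul; auto; repeat apply act_in01; auto. Qed.

Lemma act_gconj c u x : in01 x -> phi (gconj G c u) x = phi c (phi u (phi (ginv G c) x)).
Proof. intros Hx; unfold gconj; rewrite !Hmul; auto; repeat apply act_in01; auto. Qed.

Lemma linear_germ_inverse g p sg : in01 p -> phi g p = p -> germ_side sg p ->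
  exists s s', s > 0 /\ s' > 0 /\ s' * s = 1 /\
    linear_germ sg (phi g) p s /\ linear_germ sg (phi (ginv G g)) p s'.
Proof.
  intros Hp Hg Hsg.
  destruct (PL_linear_germ (phi g) p sg (HPL g) Hp Hg Hsg) as [s [Hs Lg]].
  destruct (PL_linear_germ (phi (ginv G g)) p sg (HPL _) Hp (act_fix_inv g p Hp Hg) Hsg)
    as [s' [Hs' Lg']].
  exists s, s'; repeat split; auto.
  apply (linear_germ_id_slope sg (fun x => phi (ginv G g) (phi g x)) p); auto.
  - now apply linear_germ_comp.
  - intros x Hx; now apply act_invl.
Qed.

(* Slopes at a common fixed point multiply, so the commutator has slope 1 there. *)
Lemma gcomm_germ u v p sg : in01 p -> phi u p = p -> phi v p = p -> germ_side sg p ->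
  linear_germ sg (phi (gcomm G u v)) p 1.
Proof.
  intros Hp Hu Hv Hsg.
  destruct (linear_germ_inverse u p sg Hp Hu Hsg) as [su [su' [Hsu [Hsu' [E1 [Lu Lu']]]]]].
  destruct (linear_germ_inverse v p sg Hp Hv Hsg) as [sv [sv' [Hsv [Hsv' [E2 [Lv Lv']]]]]].
  pose proof (linear_germ_comp _ _ _ _ _ _ Lu' Lv' Hsv') as L1.
  pose proof (linear_germ_comp _ _ _ _ _ _ Lv L1 ltac:(nra)) as L2.
  pose proof (linear_germ_comp _ _ _ _ _ _ Lu L2 ltac:(nra)) as L3.
  replace (su * (sv * (su' * sv'))) with ((su' * su) * (sv' * sv)) in L3 by ring.
  rewrite E1, E2, Rmult_1_l in L3.
  eapply linear_germ_ext; [|exact L3]; intros x Hx; simpl; now rewrite act_gcomm.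
Qed.

Definition locally_id (u : G) (p : R) : Prop :=
  exists e, e > 0 /\ forall x, in01 x -> p - e <= x <= p + e -> phi u x = x.

Lemma gcomm_locally_id u v p : in01 p -> phi u p = p -> phi v p = p ->
  locally_id (gcomm G u v) p.
Proof.
  intros Hp Hu Hv.
  assert (Hfix : phi (gcomm G u v) p = p)
    by (rewrite act_gcomm, (act_fix_inv v), (act_fix_inv u), Hv, Hu; auto).
  assert (Hside : forall sg, sg = 1 \/ sg = -1 -> exists e, e > 0 /\
            forall x, in01 x -> 0 <= sg * (x - p) <= e -> phi (gcomm G u v) x = x).
  { intros sg Hsg.
    destruct (classic (germ_side sg p)) as [Hs|Hs].
    - destruct (gcomm_germ u v p sg Hp Hu Hv Hs) as [e [He H]].
      exists e; split; auto; intros x _ Hx; destruct (H x Hx) as [_ ->]; ring.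
    - exists 1; split; [lra|]; intros x Hx Hr; unfold in01, germ_side in *.
      replace x with p by (destruct Hsg as [->| ->]; nra); auto. }
  destruct (Hside 1 (or_introl eq_refl)) as [e1 [He1 R1]].
  destruct (Hside (-1) (or_intror eq_refl)) as [e2 [He2 R2]].
  exists (Rmin e1 e2); split; [now apply Rmin_pos|].
  intros x Hx Hr; pose proof (Rmin_l e1 e2); pose proof (Rmin_r e1 e2).
  destruct (Rle_or_lt p x); [apply R1 | apply R2]; auto; lra.
Qed.

(** * Dynamics of two PL homeomorphisms *)

Variables a b : G.

Definition common_fix (x : R) : Prop := in01 x /\ phi a x = x /\ phi b x = x.

Definition component (p q : R) : Prop :=
  p < q /\ common_fix p /\ common_fix q /\ forall y, p < y < q -> ~ common_fix y.

Lemma common_fix_0 : common_fix 0.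
Proof. split; [apply in01_0 | split; [apply (HPL a) | apply (HPL b)]]. Qed.

Lemma common_fix_1 : common_fix 1.
Proof. split; [apply in01_1 | split; [apply (HPL a) | apply (HPL b)]]. Qed.

Lemma letter_common_fix l x : common_fix x -> phi (gletter G a b l) x = x.
Proof.
  intros [Hx [Ha Hb]]; destruct l as [[] []]; unfold gletter; simpl; auto;
  now apply act_fix_inv.
Qed.

Lemma word_common_fix w x : common_fix x -> phi (geval G a b w) x = x.
Proof.
  intros Hx; pose proof Hx as [Hx01 _]; induction w as [|l w IH]; simpl.
  - now apply act_one.
  - now rewrite Hmul, IH, letter_common_fix.
Qed.

Lemma component_in01 p q y : component p q -> p < y < q -> in01 y.
Proof. intros [_ [[[Hp _] _] [[[_ Hq] _] _]]] Hy; unfold in01; lra. Qed.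

Lemma word_component w p q y : component p q -> p < y < q -> p < phi (geval G a b w) y < q.
Proof. intros [_ [Hp [Hq _]]]; apply act_interval; try apply Hp; try apply Hq; now apply word_common_fix. Qed.

Lemma letter_component l p q y : component p q -> p < y < q -> p < phi (gletter G a b l) y < q.
Proof. intros [_ [Hp [Hq _]]]; apply act_interval; try apply Hp; try apply Hq; now apply letter_common_fix. Qed.

Lemma lub_invariant_fixed (E : R -> Prop) u s : (forall t, E t -> in01 t) ->
  (forall t, E t -> E (phi u t)) -> (forall t, E t -> E (phi (ginv G u) t)) ->
  is_lub E s -> in01 s -> phi u s = s.
Proof.
  intros Hin H1 H2 [Hub Hl] Hs.
  assert (Hge : forall v, (forall t, E t -> E (phi (ginv G v) t)) -> s <= phi v s).
  { intros v Hv; apply Hl; intros t Ht; rewrite <- (act_invr v t) by auto.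
    apply act_le; auto using act_in01. }
  pose proof (Hge u H2) as A.
  assert (B : s <= phi (ginv G u) s) by (apply Hge; intros t Ht; rewrite ginvK; auto).
  apply (act_le u) in B; auto using act_in01; rewrite act_invr in B; auto; lra.
Qed.

(* The orbit of a point of a component accumulates at the right end of the component:
   its supremum would otherwise be a common fixed point inside. *)
Lemma orbit_approaches_right_end p q y T : component p q -> p < y < q -> T < q ->
  exists k, reduced k /\ T < phi (geval G a b k) y.
Proof.
  intros Hc Hy HT; apply NNPP; intros H.
  set (E := fun t => exists k, reduced k /\ t = phi (geval G a b k) y).
  assert (HEin : forall t, E t -> p < t < q) by (intros t [k [_ ->]]; now apply word_component).
  assert (HEin01 : forall t, E t -> in01 t)
    by (intros t Ht; apply (component_in01 p q); auto).
  assert (HE0 : E y) by (exists []; split; [exact I|]; simpl; rewrite act_one; auto;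
                         now apply (component_in01 p q)).
  destruct (completeness E) as [s Hs].
  { exists T; intros t [k [Hk ->]]; destruct (Rle_or_lt (phi (geval G a b k) y) T); auto.
    exfalso; apply H; eauto. }
  { now exists y. }
  assert (Hys : y <= s) by (apply Hs; auto).
  assert (HsT : s <= T).
  { apply Hs; intros t [k [Hk ->]]; destruct (Rle_or_lt (phi (geval G a b k) y) T); auto.
    exfalso; apply H; eauto. }
  assert (HEl : forall l t, E t -> E (phi (gletter G a b l) t)).
  { intros l t [k [Hk ->]]; destruct (reduced_letter_mul G a b l k Hk) as [k' [Hk' Hv]].
    exists k'; split; auto; rewrite Hv, Hmul; auto. }
  assert (Hsin : in01 s) by (apply (component_in01 p q); auto; lra).
  apply (proj2 (proj2 (proj2 Hc)) s); [lra|]; split; [exact Hsin|]; split.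
  - apply (lub_invariant_fixed E a s HEin01 (HEl (true, true)) (HEl (true, false)) Hs Hsin).
  - apply (lub_invariant_fixed E b s HEin01 (HEl (false, true)) (HEl (false, false)) Hs Hsin).
Qed.

Lemma common_fix_lub (E : R -> Prop) p : (forall y, E y -> common_fix y) ->
  is_lub E p -> (exists y, E y) -> common_fix p.
Proof.
  intros HE Hp [y0 Hy0]; destruct (classic (E p)) as [Ep|Ep]; auto.
  pose proof (HE y0 Hy0) as [[Hy0a Hy0b] _].
  assert (Hp1 : p <= 1) by (apply Hp; intros y Hy; apply HE; auto).
  assert (Hp0 : 0 < p).
  { destruct (Rle_lt_or_eq_dec y0 p (proj1 Hp y0 Hy0)); [lra|]; now subst. }
  assert (Hacc : forall g, (forall y, E y -> phi g y = y) -> phi g p = p).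
  { intros g Hg; apply PL_fix_left_accumulation; auto; intros e He.
    destruct (lub_approx E p e Hp Ep He) as [y [Ey Hy]]; exists y; auto. }
  split; [unfold in01; lra | split; apply Hacc; intros y Hy; apply (HE y Hy)].
Qed.

Lemma common_fix_glb (E : R -> Prop) q : (forall y, E y -> common_fix y) ->
  is_glb E q -> (exists y, E y) -> common_fix q.
Proof.
  intros HE Hq [y0 Hy0]; destruct (classic (E q)) as [Eq|Eq]; auto.
  pose proof (HE y0 Hy0) as [[Hy0a Hy0b] _].
  assert (Hq0 : 0 <= q) by (apply (is_glb_greatest E); auto; intros y Hy; apply HE, Hy).
  assert (Hq1 : q < 1).
  { destruct (Rle_lt_or_eq_dec q y0 (is_glb_lower E q y0 Hq Hy0)); [lra|]; now subst. }
  assert (Hacc : forall g, (forall y, E y -> phi g y = y) -> phi g q = q).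
  { intros g Hg; apply PL_fix_right_accumulation; auto; intros e He.
    destruct (glb_approx E q e Hq Eq He) as [y [Ey Hy]]; exists y; auto. }
  split; [unfold in01; lra | split; apply Hacc; intros y Hy; apply (HE y Hy)].
Qed.

Lemma component_exists x : in01 x -> ~ common_fix x ->
  exists p q, component p q /\ p < x < q.
Proof.
  intros Hx Hnx; pose proof Hx as [Hx0 Hx1].
  set (E := fun y => common_fix y /\ y <= x).
  set (E' := fun y => common_fix y /\ x <= y).
  destruct (completeness E) as [p Hp].
  { exists x; intros y [_ Hy]; auto. }
  { exists 0; split; [apply common_fix_0 | lra]. }
  destruct (glb_exists E' x 1) as [q Hq]; [split; [apply common_fix_1 | lra] | now intros y [_ Hy]|].
  assert (HFp : common_fix p)
    by (apply (common_fix_lub E); auto; [intros y [Hy _]; auto | exists 0; split; [apply common_fix_0 | lra]]).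
  assert (HFq : common_fix q)
    by (apply (common_fix_glb E'); auto; [intros y [Hy _]; auto | exists 1; split; [apply common_fix_1 | lra]]).
  assert (Hpx : p <= x) by (apply Hp; intros y [_ Hy]; auto).
  assert (Hxq : x <= q) by (apply (is_glb_greatest E'); auto; intros y [_ Hy]; auto).
  assert (Hpx' : p < x) by (destruct (Rle_lt_or_eq_dec p x Hpx); auto; subst; contradiction).
  assert (Hxq' : x < q) by (destruct (Rle_lt_or_eq_dec x q Hxq); auto; subst; contradiction).
  exists p, q; split; [|lra].
  split; [lra|]; split; [exact HFp|]; split; [exact HFq|]; intros y Hy HFy.
  destruct (Rle_or_lt y x).
  - assert (y <= p) by (apply Hp; split; auto); lra.
  - assert (q <= y) by (apply (is_glb_lower E'); auto; split; auto; lra); lra.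
Qed.

Definition id_on (A : G) (p q : R) : Prop := forall x, p < x < q -> phi A x = x.

Definition supported_in (A : G) (p q lo hi : R) : Prop :=
  phi A p = p /\ phi A q = q /\ forall x, p < x < q -> (x <= lo \/ hi <= x) -> phi A x = x.

Lemma supported_in_range A p q lo hi : in01 p -> in01 q -> p < lo <= hi -> hi < q ->
  supported_in A p q lo hi -> forall x, lo <= x <= hi -> lo <= phi A x <= hi.
Proof.
  intros Hp Hq Hlo Hhi [_ [_ Hout]] x Hx; unfold in01 in *.
  rewrite <- (Hout lo), <- (Hout hi) at 1 by lra.
  split; apply act_le; unfold in01; lra.
Qed.

Lemma supported_in_inv A p q lo hi : in01 p -> in01 q ->
  supported_in A p q lo hi -> supported_in (ginv G A) p q lo hi.
Proof.
  intros Hp Hq [HAp [HAq Hout]]; unfold in01 in *.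
  split; [now apply act_fix_inv|]; split; [now apply act_fix_inv|].
  intros x Hx Ho; apply act_fix_inv; [unfold in01; lra | auto].
Qed.

Lemma supported_in_gconj A Z p q lo hi : in01 p -> in01 q -> p < lo <= hi -> hi < q ->
  phi Z p = p -> phi Z q = q -> supported_in A p q lo hi ->
  supported_in (gconj G Z A) p q (phi Z lo) (phi Z hi).
Proof.
  intros Hp Hq Hlo Hhi HZp HZq [HAp [HAq Hout]].
  pose proof (in01_between p q) as Hi.
  split; [rewrite act_gconj, act_fix_inv, HAp, HZp; auto|].
  split; [rewrite act_gconj, act_fix_inv, HAq, HZq; auto|].
  intros x Hx Ho; pose proof (act_interval_inv Z p q x Hp Hq HZp HZq Hx) as Hx'.
  assert (Hx01 : in01 x) by (apply Hi; auto; lra).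
  assert (HA : phi A (phi (ginv G Z) x) = phi (ginv G Z) x).
  { apply Hout; auto.
    destruct Ho as [Ho|Ho]; [left | right]; apply (act_le_rev Z);
      try (apply Hi; auto; lra); now rewrite act_invr. }
  now rewrite act_gconj, HA, act_invr.
Qed.

Lemma gcomm_disjoint_supports A B p q lo1 hi1 lo2 hi2 : in01 p -> in01 q ->
  p < lo1 <= hi1 -> hi1 <= lo2 <= hi2 -> hi2 < q ->
  supported_in A p q lo1 hi1 -> supported_in B p q lo2 hi2 -> id_on (gcomm G A B) p q.
Proof.
  intros Hp Hq H1 H2 H3 SA SB x Hx; unfold in01 in *.
  assert (Hi : forall x, p <= x <= q -> in01 x) by (intros; unfold in01; lra).
  pose proof (supported_in_inv A p q lo1 hi1 Hp Hq SA) as SA'.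
  pose proof (supported_in_inv B p q lo2 hi2 Hp Hq SB) as SB'.
  pose proof (supported_in_range _ p q lo1 hi1 Hp Hq ltac:(lra) ltac:(lra) SA') as RA'.
  pose proof (supported_in_range _ p q lo2 hi2 Hp Hq ltac:(lra) ltac:(lra) SB') as RB'.
  destruct SA as [_ [_ Ao]], SB as [_ [_ Bo]], SA' as [_ [_ Ao']], SB' as [_ [_ Bo']].
  rewrite act_gcomm by (apply Hi; lra).
  destruct (Rle_or_lt lo2 x) as [X1|X1]; [destruct (Rle_or_lt x hi2) as [X2|X2]|].
  - destruct (RB' x ltac:(lra)) as [Y1 Y2].
    rewrite (Ao' (phi (ginv G B) x)), act_invr by (try apply Hi; lra).
    apply Ao; lra.
  - rewrite (Bo' x), (Ao' x), (Bo x), (Ao x); lra.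
  - rewrite (Bo' x) by lra.
    destruct (Rle_or_lt lo1 x) as [W1|W1]; [destruct (Rle_or_lt x hi1) as [W2|W2]|].
    + destruct (RA' x ltac:(lra)).
      rewrite (Bo (phi (ginv G A) x)), act_invr by (try apply Hi; lra); reflexivity.
    + rewrite (Ao' x), (Bo x), (Ao x); lra.
    + rewrite (Ao' x), (Bo x), (Ao x); lra.
Qed.

Lemma gcomm_displaced_support A Z p q lo hi : in01 p -> in01 q -> p < lo <= hi -> hi < q ->
  phi Z p = p -> phi Z q = q -> supported_in A p q lo hi -> hi <= phi Z lo ->
  id_on (gcomm G A (gconj G Z A)) p q.
Proof.
  intros Hp Hq Hlo Hhi HZp HZq SA HZlo.
  pose proof (supported_in_gconj A Z p q lo hi Hp Hq Hlo Hhi HZp HZq SA) as SZ.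
  pose proof (act_interval Z p q hi Hp Hq HZp HZq ltac:(lra)) as HZhi.
  assert (HZ : phi Z lo <= phi Z hi) by (apply act_le; try apply (in01_between p q); auto; lra).
  apply (gcomm_disjoint_supports _ _ p q lo hi (phi Z lo) (phi Z hi)); auto; lra.
Qed.

Lemma gconj_id_on A Z p q : in01 p -> in01 q -> phi Z p = p -> phi Z q = q ->
  id_on A p q -> id_on (gconj G Z A) p q.
Proof.
  intros Hp Hq HZp HZq HA x Hx; pose proof (act_interval_inv Z p q x Hp Hq HZp HZq Hx).
  assert (Hx01 : in01 x) by (apply (in01_between p q); auto; lra).
  now rewrite act_gconj, HA, act_invr.
Qed.

Lemma gcomm_id_on A B p q : in01 p -> in01 q -> id_on A p q -> id_on B p q -> id_on (gcomm G A B) p q.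
Proof.
  intros Hp Hq HA HB x Hx; unfold in01 in *.
  assert (Hx01 : in01 x) by (unfold in01; lra).
  rewrite act_gcomm, (act_fix_inv B), (act_fix_inv A), HB, HA; auto.
Qed.

Lemma gletter_neg t : gletter G a b (t, false) = ginv G (gletter G a b (t, true)).
Proof. now destruct t. Qed.

Lemma letter_sign_nondecreasing t y : in01 y -> exists s, y <= phi (gletter G a b (t, s)) y.
Proof.
  intros Hy; destruct (Rle_or_lt y (phi (gletter G a b (t, true)) y)) as [H|H].
  - now exists true.
  - exists false; rewrite gletter_neg; apply act_inv_ge; auto; lra.
Qed.

Lemma letter_sign_nondecreasing_near t q : 0 < q -> common_fix q ->
  exists s e, e > 0 /\ forall y, q - e <= y <= q -> y <= phi (gletter G a b (t, s)) y.
Proof.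
  intros Hq HF; set (u := gletter G a b (t, true)).
  destruct (PL_linear_germ (phi u) q (-1) (HPL u) (proj1 HF) (letter_common_fix _ q HF)
              (or_intror (conj eq_refl Hq))) as [s [Hs [e [He H]]]].
  destruct (Rle_or_lt s 1) as [Hs1|Hs1]; [exists true | exists false]; exists e; split; auto;
    intros y Hy; destruct (H y ltac:(lra)) as [Hin Hv].
  - fold u; rewrite Hv; nra.
  - rewrite gletter_neg; apply act_inv_ge; auto; fold u; rewrite Hv; nra.
Qed.

Lemma repeat_nondecreasing l n y : in01 y -> y <= phi (gletter G a b l) y ->
  y <= phi (geval G a b (repeat l n)) y.
Proof.
  intros Hy H; induction n as [|n IH]; simpl; [rewrite act_one; auto; lra|].
  rewrite Hmul by auto; apply Rle_trans with (phi (gletter G a b l) y); auto.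
  apply act_le; auto using act_in01.
Qed.

Lemma pumped_point_above p q y y1 rho ell' ell k M e : component p q ->
  p < y < q -> p < y1 < q -> y <= phi (gletter G a b ell) y ->
  (forall x, q - e <= x <= q -> x <= phi (gletter G a b ell') x) ->
  q - e <= phi (geval G a b k) y -> phi (ginv G (gletter G a b rho)) y1 < phi (geval G a b k) y ->
  y1 < phi (gletter G a b rho) (phi (geval G a b (repeat ell' M))
         (phi (geval G a b k) (phi (geval G a b (repeat ell M)) y))).
Proof.
  intros Hc Hy Hy1 Hell Hell' Hke Hkr.
  assert (Hi : forall x, p < x < q -> in01 x) by (intros; now apply (component_in01 p q)).
  set (Y := phi (geval G a b (repeat ell M)) y).
  assert (HY : y <= Y) by (apply repeat_nondecreasing; auto).
  assert (HYr : p < Y < q) by (apply word_component; auto).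
  set (y2 := phi (geval G a b k) Y).
  assert (Hy2 : p < y2 < q) by (apply word_component; auto).
  assert (Hky : phi (geval G a b k) y <= y2) by (apply act_le; auto).
  assert (Hy2' : y2 <= phi (geval G a b (repeat ell' M)) y2)
    by (apply repeat_nondecreasing, Hell'; auto; lra).
  assert (Hv : phi (ginv G (gletter G a b rho)) y1 < phi (geval G a b (repeat ell' M)) y2)
    by lra.
  apply (act_lt (gletter G a b rho)) in Hv; auto using act_in01.
  now rewrite act_invr in Hv by auto.
Qed.

(* The conjugator is [rho ell'^M k ell^M lam]: [lam] and [rho] make it good for [w],
   [ell^M] does not move the point down, [k] pushes it close to [q], where [ell'^M]
   does not move it down, and [rho] finally lands it above [y1]. *)
Lemma conjugator_exists w p q y0 y1 : cyc_reduced w -> component p q ->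
  p < y0 -> y0 <= y1 -> y1 < q ->
  exists z, good_conjugator w z /\ y1 < phi (geval G a b z) y0.
Proof.
  intros Hw Hc Hy0 Hy01 Hy1; pose proof Hc as [Hpq [HFp [HFq _]]].
  assert (Hi : forall x, p < x < q -> in01 x) by (intros; now apply (component_in01 p q)).
  destruct (letter_avoid2 (letter_inv (hd ltr0 w)) (last w ltr0)) as [lam [Hl1 Hl2]].
  set (y0' := phi (gletter G a b lam) y0).
  assert (Hy0' : p < y0' < q) by (apply letter_component; auto; lra).
  destruct (letter_sign_nondecreasing (negb (fst lam)) y0' (Hi _ Hy0')) as [sl Hsl].
  destruct (letter_sign_nondecreasing_near (fst lam) q ltac:(destruct HFp as [[]]; lra) HFq)
    as [sl' [e [He Hsl']]].
  destruct (letter_avoid3 (hd ltr0 w) (letter_inv (last w ltr0)) (letter_inv (fst lam, sl')))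
    as [rho [Hr1 [Hr2 Hr3]]].
  set (T := Rmax (q - e) (phi (ginv G (gletter G a b rho)) y1)).
  assert (HT1 : q - e <= T) by apply Rmax_l.
  assert (HT2 : phi (ginv G (gletter G a b rho)) y1 <= T) by apply Rmax_r.
  assert (HT : T < q).
  { apply Rmax_lub_lt; [lra|]; rewrite <- gletter_inv.
    apply (letter_component (letter_inv rho) p q y1); auto; lra. }
  destruct (orbit_approaches_right_end p q y0' T Hc Hy0' HT) as [k [Hrk Hk]].
  destruct (pumped_word G a b rho (fst lam, sl') (negb (fst lam), sl) lam k Hrk)
    as [z [Hzne [Hrz [Hzh [Hzl HZ]]]]];
    [intros E; apply Hr3; now rewrite E, letter_invK | simpl; now destruct (fst lam)..|].
  exists z; split; [apply good_conjugator_ends; auto; congruence|].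
  assert (Hy1' : in01 y1) by (apply Hi; lra).
  rewrite HZ, !Hmul by (repeat apply act_in01; apply Hi; lra).
  apply (pumped_point_above p q) with (e := e); fold y0'; auto; lra.
Qed.

Definition locally_id_at_fix (u : G) : Prop := forall r, common_fix r -> locally_id u r.

Lemma gconj_fix c u x : in01 x -> phi c x = x -> phi u x = x -> phi (gconj G c u) x = x.
Proof. intros Hx Hc Hu; now rewrite act_gconj, act_fix_inv, Hu. Qed.

Lemma supported_in_of_locally_id u p q : in01 p -> in01 q -> p < q ->
  phi u p = p -> phi u q = q -> locally_id u p -> locally_id u q ->
  exists lo hi, p < lo <= hi /\ hi < q /\ supported_in u p q lo hi.
Proof.
  intros Hp Hq Hpq Hup Huq [ep [Hep Hlp]] [eq [Heq Hlq]].
  pose proof (Rmin_l (Rmin ep eq) ((q - p) / 2)); pose proof (Rmin_r (Rmin ep eq) ((q - p) / 2)).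
  pose proof (Rmin_l ep eq); pose proof (Rmin_r ep eq).
  assert (He : 0 < Rmin (Rmin ep eq) ((q - p) / 2)) by (repeat apply Rmin_pos; lra).
  set (e := Rmin (Rmin ep eq) ((q - p) / 2)) in *.
  exists (p + e), (q - e); split; [lra|]; split; [lra|]; split; [auto|]; split; [auto|].
  intros x Hx [Ho|Ho]; [apply Hlp | apply Hlq]; try (apply (in01_between p q); auto); lra.
Qed.

(* With [W = c U c^-1], [U] cyclically reduced and supported in [[y0, y1]] inside the
   component, and [Z] moving [y0] beyond [y1], the commutator [[U, Z U Z^-1]] is the
   identity on the component, still a nontrivial reduced word, and still the identity
   wherever [W] was. *)
Lemma supported_in_of_gconj_locally_id c u p q : in01 p -> in01 q -> p < q ->
  phi c p = p -> phi c q = q -> phi u p = p -> phi u q = q ->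
  locally_id (gconj G c u) p -> locally_id (gconj G c u) q ->
  exists y0 y1, p < y0 <= y1 /\ y1 < q /\ supported_in u p q y0 y1.
Proof.
  intros Hp Hq Hpq Hcp Hcq Hup Huq Hlp Hlq.
  assert (Hcp' : phi (ginv G c) p = p) by now apply act_fix_inv.
  assert (Hcq' : phi (ginv G c) q = q) by now apply act_fix_inv.
  destruct (supported_in_of_locally_id (gconj G c u) p q Hp Hq Hpq) as [lo [hi [Hlo [Hhi SW]]]];
    auto; try now apply gconj_fix.
  pose proof (supported_in_gconj _ (ginv G c) p q lo hi Hp Hq Hlo Hhi Hcp' Hcq' SW) as SU.
  rewrite gconj_invK in SU.
  pose proof (act_interval_inv c p q lo Hp Hq Hcp Hcq ltac:(lra)).
  pose proof (act_interval_inv c p q hi Hp Hq Hcp Hcq ltac:(lra)).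
  exists (phi (ginv G c) lo), (phi (ginv G c) hi); split; [split|split]; auto; try lra.
  apply act_le; try apply (in01_between p q); auto; lra.
Qed.

Lemma kill_component W p q : W <> [] -> reduced W -> locally_id_at_fix (geval G a b W) ->
  component p q -> exists W2, W2 <> [] /\ reduced W2 /\
    locally_id_at_fix (geval G a b W2) /\ id_on (geval G a b W2) p q /\
    (forall p' q', component p' q' -> id_on (geval G a b W) p' q' -> id_on (geval G a b W2) p' q').
Proof.
  intros HW HrW HW1 Hc; pose proof Hc as [Hpq [HFp [HFq _]]].
  destruct (cyclic_reduction W HW HrW) as [c [w [HWe Hw]]].
  set (C := geval G a b c); set (U := geval G a b w).
  assert (HevW : geval G a b W = gconj G C U) by (now rewrite HWe, !geval_app, geval_word_inv).
  assert (Hfix : forall v r, common_fix r -> phi (geval G a b v) r = r)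
    by (intros; now apply word_common_fix).
  pose proof HFp as [Hp _]; pose proof HFq as [Hq _].
  destruct (supported_in_of_gconj_locally_id C U p q Hp Hq Hpq) as [y0 [y1 [Hy [Hy1 SU]]]];
    try (apply Hfix; auto); try (rewrite <- HevW; apply HW1; auto).
  destruct (conjugator_exists w p q y0 y1 Hw Hc ltac:(lra) ltac:(lra) Hy1) as [z [Hwz HZy]].
  set (Z := geval G a b z) in *.
  exists (expand w z false comm_word); split; [|split; [|split; [|split]]].
  - apply expand_nonnil; [exact Hwz | discriminate].
  - apply reduced_expand; [exact Hwz | apply reduced_comm_word].
  - rewrite geval_expand, geval_comm_word; intros r Hr.
    apply gcomm_locally_id; try apply Hr; [apply Hfix | apply gconj_fix]; auto; apply Hr.
  - rewrite geval_expand, geval_comm_word.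
    fold Z; apply (gcomm_displaced_support _ _ p q y0 y1); auto; try (apply Hfix; auto); lra.
  - intros p' q' Hc' HWid; pose proof Hc' as [_ [[Hp' _] [[Hq' _] _]]].
    assert (HC : forall r, common_fix r -> phi (ginv G C) r = r)
      by (intros r Hr; apply act_fix_inv; [apply Hr | now apply Hfix]).
    assert (HUid : id_on U p' q').
    { rewrite <- (gconj_invK G C U), <- HevW.
      apply gconj_id_on; auto; apply HC; apply Hc'. }
    rewrite geval_expand, geval_comm_word.
    apply gcomm_id_on; auto; apply gconj_id_on; auto; apply Hfix; apply Hc'.
Qed.

Lemma component_right_unique p q q' : component p q -> component p q' -> q = q'.
Proof.
  intros [H1 [_ [HFq Hno]]] [H1' [_ [HFq' Hno']]].
  destruct (Rtotal_order q q') as [L|[E|L]]; auto.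
  - exfalso; apply (Hno' q); auto.
  - exfalso; apply (Hno q'); auto.
Qed.

(* Otherwise [a] and [b] would fix both ends of the left component, hence all of it. *)
Lemma component_left_unique_in_piece A B p q p' q' :
  affine_on (phi a) A B -> affine_on (phi b) A B -> component p q -> component p' q' ->
  A <= p <= B -> A <= p' <= B -> p = p'.
Proof.
  intros Ha Hb.
  assert (Hlt : forall p q p' q', component p q -> component p' q' ->
            A <= p -> p < p' -> p' <= B -> False).
  { clear p q p' q'; intros p q p' q' Hc [_ [HFp' _]] HA Hpp' HB.
    pose proof Hc as [Hpq [HFp [HFq Hno]]].
    assert (Hqp' : q <= p') by (destruct (Rle_or_lt q p'); auto; exfalso; apply (Hno p'); auto).
    set (m := (p + q) / 2).
    apply (Hno m); [unfold m; lra|]; split; [apply (component_in01 p q); auto; unfold m; lra|].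
    split; [apply (affine_two_fixed (phi a) A B p q) | apply (affine_two_fixed (phi b) A B p q)];
      auto; try lra; try apply HFp; try apply HFq; unfold m; lra. }
  intros Hc Hc' Hp Hp'; destruct (Rtotal_order p p') as [L|[E|L]]; auto; exfalso;
    [apply (Hlt p q p' q') | apply (Hlt p' q' p q)]; auto; lra.
Qed.

Lemma components_finite : exists Ps : list R, forall p q, component p q -> In p Ps.
Proof.
  pose proof (HPL a) as [_ [_ [_ [_ [nf [xf [Xf0 [Xfn [Xfinc Xfaff]]]]]]]]].
  pose proof (HPL b) as [_ [_ [_ [_ [ng [xg [Xg0 [Xgn [Xginc Xgaff]]]]]]]]].
  set (code := fun (p : R) (c : nat * nat) => (fst c < nf)%nat /\ (snd c < ng)%nat /\
         xf (fst c) <= p < xf (S (fst c)) /\ xg (snd c) <= p < xg (S (snd c))).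
  destruct (finite_of_injective_code (fun p => exists q, component p q) code
              (list_prod (seq 0 nf) (seq 0 ng))) as [Ps HPs].
  - intros p [q Hc]; pose proof Hc as [Hpq [[[Hp0 Hp1] _] [[[Hq0 Hq1] _] _]]].
    destruct (breakpoint_right xf nf p ltac:(lra) ltac:(lra)) as [i [Hi Hpi]].
    destruct (breakpoint_right xg ng p ltac:(lra) ltac:(lra)) as [j [Hj Hpj]].
    exists (i, j); split; [apply in_prod; apply in_seq; lia | now repeat split].
  - intros [i j] p p' _ [q Hc] [q' Hc'] [Hi [Hj [Hpi Hpj]]] [_ [_ [Hpi' Hpj']]]; simpl in *.
    pose proof (Rmax_l (xf i) (xg j)); pose proof (Rmax_r (xf i) (xg j)).
    pose proof (Rmin_l (xf (S i)) (xg (S j))); pose proof (Rmin_r (xf (S i)) (xg (S j))).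
    assert (Hin : forall x, xf i <= x < xf (S i) -> xg j <= x < xg (S j) ->
              Rmax (xf i) (xg j) <= x <= Rmin (xf (S i)) (xg (S j)))
      by (intros; split; [apply Rmax_lub | apply Rmin_glb]; lra).
    apply (component_left_unique_in_piece (Rmax (xf i) (xg j)) (Rmin (xf (S i)) (xg (S j)))
             p q p' q'); auto.
    + apply (affine_on_sub _ (xf i) (xf (S i))); [exact (Xfaff i Hi) | lra | lra].
    + apply (affine_on_sub _ (xg j) (xg (S j))); [exact (Xgaff j Hj) | lra | lra].
  - exists Ps; intros p q Hc; apply HPs; now exists q.
Qed.

Hypothesis Hinj : forall g g', (forall x, in01 x -> phi g x = phi g' x) -> g = g'.

(* Kill the components one at a time; only finitely many of them carry a point moved by
   the current word, and a word that moves no point is a relation. *)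
Lemma relation_of_locally_id_word (Ps : list R) W : W <> [] -> reduced W ->
  locally_id_at_fix (geval G a b W) ->
  (forall p q, component p q -> ~ id_on (geval G a b W) p q -> In p Ps) ->
  exists W', W' <> [] /\ reduced W' /\ geval G a b W' = gone G.
Proof.
  revert W; induction Ps as [|p0 Ps IH]; intros W HW HrW HW1 Hmoving.
  - exists W; repeat split; auto; apply Hinj; intros x Hx; rewrite act_one by auto.
    destruct (classic (common_fix x)) as [HF|HF].
    + destruct (HW1 x HF) as [e [He H]]; apply H; auto; lra.
    + destruct (component_exists x Hx HF) as [p [q [Hc Hpx]]].
      apply NNPP; intros Hn; apply (Hmoving p q Hc); intros Hid; apply Hn, Hid, Hpx.
  - destruct (classic (exists q0, component p0 q0)) as [[q0 Hc0]|Hno].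
    + destruct (kill_component W p0 q0 HW HrW HW1 Hc0) as [W2 [HW2 [HrW2 [HW21 [Hid Hkeep]]]]].
      apply (IH W2 HW2 HrW2 HW21); intros p q Hc Hn.
      assert (HnW : ~ id_on (geval G a b W) p q) by (intros HWid; now apply Hn, Hkeep).
      destruct (Hmoving p q Hc HnW) as [<-|Hin]; auto.
      exfalso; apply Hn; now rewrite <- (component_right_unique p0 q0 q Hc0 Hc).
    + apply (IH W HW HrW HW1); intros p q Hc Hn.
      destruct (Hmoving p q Hc Hn) as [<-|Hin]; auto; exfalso; eauto.
Qed.

Lemma not_free_pair_PL : ~ free_pair G a b.
Proof.
  intros Hf; destruct components_finite as [Ps HPs].
  destruct (relation_of_locally_id_word Ps comm_word) as [W [HW [HrW HWe]]].
  - discriminate.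
  - apply reduced_comm_word.
  - intros r Hr; rewrite geval_comm_word; apply gcomm_locally_id; apply Hr.
  - intros p q Hc _; eapply HPs; eauto.
  - exact (Hf W HW HrW HWe).
Qed.

End PLAction.

Lemma no_free_P (G : Grp) : iso_to_P G -> ~ has_nonab_free_subgroup G.
Proof.
  intros [phi [HPL [_ [Hinj Hmul]]]] [a [b Hf]].
  exact (not_free_pair_PL G phi HPL Hmul a b Hinj Hf).
Qed.

Theorem corollary4p8 : forall G : Grp, inC G -> ~ has_nonab_free_subgroup G.
Proof.
  intros G HC; induction HC.
  - now apply no_free_NS.
  - now apply no_free_P.
  - now apply (no_free_sub G H f).
  - now apply (no_free_image G H f).
  - now apply (no_free_ext G N Q i p).
  - now apply (no_free_dirunion G I Gi j).
Qed.
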